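(* Let $n\ge4$ and let $D_0\subsetneq D_1\subsetneq\dots\subsetneq D_m$ be a chain of sets of pairwise noncrossing diagonals of $P_n$. Then the points $\Phi(D_0),\dots,\Phi(D_m)$ are affinely independent, so their convex hull $\Phi(\Delta)$ is an $m$-simplex. In particular, for a maximal chain (a full flag of faces of $K_{n-1}$, with $m=n-3$), the image is an $(n-3)$-simplex.
   Context: $P_n$ is a regular $n$-gon whose edges are labeled cyclically by a fixed circular ordering; two diagonals cross if they meet in the interior; $\mathcal D$ is the set of diagonals. Faces of the associahedron $K_{n-1}$ correspond to sets of pairwise noncrossing diagonals (face of $D$ contains face of $D'$ iff $D\subseteq D'$), and a chain of such sets corresponds to a flag of faces and to a simplex $\Delta$ of the barycentric subdivision of $K_{n-1}$. For a triangulation $T$, $\Phi(T)\in\mathbb R^{\mathcal D}$ has $d$-coordinate $1/(n-3)$ if $d\in T$ and $0$ otherwise; for a set $D$ of pairwise noncrossing diagonals, $\Phi(D)$ is the average of $\Phi(T)$ over triangulations $T\supseteq D$; $\Phi(\Delta)$ is the convex hull of the $\Phi(D_i)$. *)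

From HB Require Import structures.
From mathcomp Require Import all_boot all_order all_algebra.
Set Implicit Arguments. Unset Strict Implicit. Unset Printing Implicit Defensive.
Import Order.TTheory GRing.Theory Num.Theory.
Local Open Scope ring_scope.

(* Vertices of the regular n-gon P_n are 0, 1, ..., n-1 in cyclic order;
   the edges are {i, i+1} and {n-1, 0}.  A diagonal is an unordered pair of
   non-adjacent vertices, represented as (i, j) with i < j. *)
Definition is_diag (n : nat) (p : 'I_n * 'I_n) : bool :=
  [&& (p.1.+1 < p.2)%N & ~~ ((p.1 == 0%N :> nat) && (p.2 == n.-1 :> nat))].

Definition diag (n : nat) := {p : 'I_n * 'I_n | is_diag p}.

(* Two diagonals cross iff they meet in the interior of P_n, i.e. their
   endpoints strictly interleave along the boundary. *)
Definition cross (n : nat) (d e : diag n) : bool :=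
  let: (a, b) := val d in let: (c, f) := val e in
  [|| [&& (a < c)%N, (c < b)%N & (b < f)%N]
    | [&& (c < a)%N, (a < f)%N & (f < b)%N]].

Definition noncrossing (n : nat) (D : {set diag n}) : bool :=
  [forall d in D, forall e in D, ~~ cross d e].

Definition triangulation (n : nat) (T : {set diag n}) : bool :=
  noncrossing T && [forall d : diag n, noncrossing (d |: T) ==> (d \in T)].

Definition PhiT (R : fieldType) (n : nat) (T : {set diag n}) : {ffun diag n -> R^o} :=
  [ffun d => ((if d \in T then (n - 3)%:R^-1 else 0) : R^o)].

Definition Phi (R : fieldType) (n : nat) (D : {set diag n}) : {ffun diag n -> R^o} :=
  (#|[set T : {set diag n} | triangulation T & D \subset T]|%:R)^-1 *:
    \sum_(T : {set diag n} | triangulation T && (D \subset T)) PhiT R T.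

Definition affinely_independent (R : fieldType) (V : lmodType R) (m : nat)
    (x : 'I_m.+1 -> V) : Prop :=
  forall c : 'I_m.+1 -> R,
    \sum_(i < m.+1) c i = 0 -> \sum_(i < m.+1) c i *: x i = 0 ->
    forall i, c i = 0.

(* The d-coordinate of Phi(D) equals 1/(n-3) exactly when d lies in D: if d is not in D,
   some triangulation containing D avoids d, namely any completion of D together with
   the flip of d (or any completion of D at all, if d crosses D).  So for k < m a
   diagonal d of D_(k+1) minus D_k yields the affine functional x |-> x_d - 1/(n-3),
   which vanishes at Phi(D_l) for l > k but not at Phi(D_k); such a triangular family
   of functionals forces affine independence. *)

From HB Require Import structures.
From mathcomp Require Import all_boot all_order all_algebra zify.
Import Order.TTheory GRing.Theory Num.Theory.

Definition interleave (a b c f : nat) : bool :=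
  [|| [&& a < c, c < b & b < f] | [&& c < a, a < f & f < b]].

Lemma interleaveC a b c f : interleave a b c f = interleave c f a b.
Proof. by rewrite /interleave; lia. Qed.

Lemma quad_cross02 {v0 v1 v2 v3 p q} :
  v0 < v1 -> v1 < v2 -> v2 < v3 -> p < q ->
  ~~ interleave v0 v1 p q -> ~~ interleave v1 v2 p q ->
  ~~ interleave v2 v3 p q -> ~~ interleave v0 v3 p q ->
  interleave v0 v2 p q -> p = v1 /\ q = v3.
Proof. by rewrite /interleave; lia. Qed.

Lemma quad_cross13 {v0 v1 v2 v3 p q} :
  v0 < v1 -> v1 < v2 -> v2 < v3 -> p < q ->
  ~~ interleave v0 v1 p q -> ~~ interleave v1 v2 p q ->
  ~~ interleave v2 v3 p q -> ~~ interleave v0 v3 p q ->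
  interleave v1 v3 p q -> p = v0 /\ q = v2.
Proof. by rewrite /interleave; lia. Qed.

Section Diagonals.

Context {n : nat}.
Implicit Types (D E T : {set diag n}) (d e g h : diag n).

Lemma diag_lt g : (val g).1 < (val g).2.
Proof. by case: g => [[p q] /= /andP[/ltnW]]. Qed.

Lemma diag_inj g h :
  (val g).1 = (val h).1 :> nat -> (val g).2 = (val h).2 :> nat -> g = h.
Proof.
by case: g h => [[p q] ?] [[r s] ?] /= /val_inj pr /val_inj qs; apply: val_inj; rewrite /= pr qs.
Qed.

Lemma cross_interleave g h :
  cross g h = interleave (val g).1 (val g).2 (val h).1 (val h).2.
Proof. by case: g => [[p q] ?]; case: h => [[r s] ?]. Qed.

Lemma crossC g h : cross g h = cross h g.
Proof. by rewrite !cross_interleave interleaveC. Qed.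

Lemma noncrossingP D :
  reflect (forall g h, g \in D -> h \in D -> ~~ cross g h) (noncrossing D).
Proof.
apply: (iffP forallP) => [ncD g h gD hD | ncD g].
  by move: (ncD g); rewrite gD => /forall_inP/(_ h hD).
by apply/implyP => gD; apply/forall_inP => h hD; apply: ncD.
Qed.

Lemma noncrossingS {D E} : D \subset E -> noncrossing E -> noncrossing D.
Proof.
move=> /subsetP sDE /noncrossingP ncE; apply/noncrossingP => g h gD hD.
by apply: ncE; apply: sDE.
Qed.

(* u < v need not span a diagonal: a side of P_n is compatible with every D. *)
Definition compatible D (u v : nat) : Prop :=
  forall h, h \in D -> ~~ interleave u v (val h).1 (val h).2.

Lemma compatible_edge D u : compatible D u u.+1.
Proof. by move=> h _; rewrite /interleave; lia. Qed.

Lemma compatible_closing_edge D : compatible D 0 n.-1.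
Proof.
by move=> h _; have := ltn_ord (val h).2; have := diag_lt h; rewrite /interleave; lia.
Qed.

Lemma compatible_mem D g : noncrossing D -> g \in D -> compatible D (val g).1 (val g).2.
Proof. by move=> /noncrossingP ncD gD h hD; rewrite -cross_interleave ncD. Qed.

Lemma noncrossing_setU1P D e :
  reflect (noncrossing D /\ compatible D (val e).1 (val e).2) (noncrossing (e |: D)).
Proof.
apply: (iffP idP) => [ncD | [/noncrossingP ncD compat_e]].
  split; first exact: noncrossingS (subsetUr _ _) ncD.
  by move=> h hD; apply: compatible_mem ncD _ _ _; rewrite ?setU11 ?setU1r.
have ncE h : h \in D -> ~~ cross e h by move=> hD; rewrite cross_interleave compat_e.
apply/noncrossingP => g h /setU1P[-> | gD] /setU1P[-> | hD].
- by rewrite cross_interleave /interleave; lia.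
- exact: ncE.
- by rewrite crossC ncE.
- exact: ncD.
Qed.

Definition chord_in D (u v : nat) : bool :=
  [exists h in D, ((val h).1 == u :> nat) && ((val h).2 == v :> nat)].

Lemma chord_inP D u v :
  reflect (exists2 h, h \in D & (val h).1 = u :> nat /\ (val h).2 = v :> nat)
          (chord_in D u v).
Proof.
apply: (iffP exists_inP) => [[h hD /andP[/eqP hu /eqP hv]] | [h hD [hu hv]]].
  by exists h.
by exists h; rewrite // hu hv !eqxx.
Qed.

Lemma chord_in_mem D h : h \in D -> chord_in D (val h).1 (val h).2.
Proof. by move=> hD; apply/chord_inP; exists h. Qed.

Lemma compatible_chord_in D u v : noncrossing D -> chord_in D u v -> compatible D u v.
Proof. by move=> ncD /chord_inP[g gD [<- <-]]; apply: compatible_mem. Qed.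

(* The apex X of the triangle on the inner side of the chord (a, b): the farthest
   vertex from a that is joined to a by an edge or by a diagonal of D. *)
Lemma inner_apex {D} {a b : 'I_n} : a.+1 < b -> noncrossing D -> compatible D a b ->
  exists2 X : 'I_n, a < X < b & compatible D a X /\ compatible D X b.
Proof.
move=> ab ncD cab.
have a1n : a.+1 < n by apply: ltn_trans ab (ltn_ord b).
pose P (x : 'I_n) := (x == a.+1 :> nat) || [&& a < x, x < b & chord_in D a x].
have P0 : P (Ordinal a1n) by rewrite /P eqxx.
case: (arg_maxnP val P0) => X PX Xmax.
have [aXb cX1] : a < X < b /\ compatible D a X.
  case/orP: PX => [/eqP -> | /and3P[aX Xb aXD]].
    by rewrite ltnSn ab; split => //; apply: compatible_edge.
  by rewrite aX Xb; split => //; apply: compatible_chord_in.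
exists X => //; split=> // h hD.
have Xm : (val h).1 = a :> nat -> (val h).2 < b -> (val h).2 <= X.
  by move=> h1 h2; apply: Xmax; rewrite /P h2 -h1 diag_lt chord_in_mem ?orbT.
move: (cab h hD) (cX1 h hD) (diag_lt h) Xm aXb; rewrite /interleave; lia.
Qed.

(* On the outer side of (a, b) the apex is the largest vertex below a joined to b by a
   diagonal of D, if any; otherwise the largest vertex above b joined to b by an edge
   or a diagonal of D, or vertex 0 when b = n - 1. *)
Section OuterApex.

Variables (D : {set diag n}) (a b : 'I_n).
Hypotheses (ab : a < b) (ncD : noncrossing D) (cab : compatible D a b).

Lemma outer_apex_below (p : 'I_n) : p < a -> chord_in D p b ->
  exists2 Y : 'I_n, Y < a & compatible D Y a /\ compatible D Y b.
Proof.
move=> pa pbD; pose P (y : 'I_n) := (y < a) && chord_in D y b.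
have P0 : P p by rewrite /P pa.
case: (arg_maxnP val P0) => Y /andP[Ya YbD] Ymax.
have cYb : compatible D Y b by apply: compatible_chord_in.
exists Y => //; split=> // h hD.
have Ym : (val h).2 = b :> nat -> (val h).1 < a -> (val h).1 <= Y.
  by move=> h2 h1; apply: Ymax; rewrite /P h1 -h2 chord_in_mem.
move: (cab h hD) (cYb h hD) (diag_lt h) Ym Ya; rewrite /interleave; lia.
Qed.

Hypothesis no_chord_below : forall p : 'I_n, p < a -> ~~ chord_in D p b.

Lemma no_chord_belowE h : h \in D -> (val h).2 = b :> nat -> a <= (val h).1.
Proof.
move=> hD h2; rewrite leqNgt; apply/negP => /no_chord_below.
by rewrite -h2 chord_in_mem.
Qed.

Lemma outer_apex_above : b.+1 < n ->
  exists2 Y : 'I_n, b < Y & compatible D b Y /\ compatible D a Y.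
Proof.
move=> b1n; pose P (y : 'I_n) := (y == b.+1 :> nat) || (b < y) && chord_in D b y.
have P0 : P (Ordinal b1n) by rewrite /P eqxx.
case: (arg_maxnP val P0) => Y PY Ymax.
have [bY cY1] : b < Y /\ compatible D b Y.
  case/orP: PY => [/eqP -> | /andP[bY bYD]]; last by split; last exact: compatible_chord_in.
  by split; [apply: ltnSn | apply: compatible_edge].
exists Y => //; split=> // h hD.
have Ym : (val h).1 = b :> nat -> (val h).2 <= Y.
  by move=> h1; apply: Ymax; rewrite /P -h1 diag_lt chord_in_mem ?orbT.
have Yb := @no_chord_belowE h hD.
move: (cab h hD) (cY1 h hD) (diag_lt h) (ltn_ord (val h).2) Ym Yb bY.
rewrite /interleave; lia.
Qed.

Lemma outer_apex_closing : b = n.-1 :> nat -> 0 < a -> compatible D 0 a.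
Proof.
move=> bn a0 h hD; have Yb := @no_chord_belowE h hD.
move: (cab h hD) (diag_lt h) (ltn_ord (val h).2) Yb bn; rewrite /interleave; lia.
Qed.

End OuterApex.

Arguments outer_apex_below {D a b} ab ncD cab {p}.
Arguments outer_apex_above {D a b}.
Arguments outer_apex_closing {D a b}.

Lemma outer_apex {D} {a b : 'I_n} :
  a < b -> ~~ ((a == 0 :> nat) && (b == n.-1 :> nat)) ->
  noncrossing D -> compatible D a b ->
  exists Y : 'I_n, (b < Y /\ compatible D b Y /\ compatible D a Y)
                 \/ (Y < a /\ compatible D Y a /\ compatible D Y b).
Proof.
move=> ab not_closing ncD cab.
case: (boolP [exists p : 'I_n, (p < a) && chord_in D p b]).
  case/existsP=> p /andP[pa pbD].
  by have [Y Ya cY] := outer_apex_below ab ncD cab pa pbD; exists Y; right.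
move=> /existsPn no_below.
have nb (p : 'I_n) : p < a -> ~~ chord_in D p b by move=> pa; move: (no_below p); rewrite pa.
case: (ltnP b.+1 n) => [b1n | nb1].
  by have [Y bY cY] := outer_apex_above ab ncD cab nb b1n; exists Y; left.
have bn : b = n.-1 :> nat by have := ltn_ord b; lia.
have a0 : 0 < a by move: not_closing; rewrite bn eqxx andbT lt0n.
have n0 : 0 < n by apply: leq_ltn_trans (ltn_ord b).
exists (Ordinal n0); right; split=> //=; split.
  exact: outer_apex_closing ab ncD cab nb bn a0.
by rewrite bn; apply: compatible_closing_edge.
Qed.

(* The flip of d: the other diagonal of the quadrilateral formed by d and the apices of
   the two triangles adjacent to d. *)
Lemma flip_diagonal {D d} : noncrossing (d |: D) -> d \notin D ->
  exists2 e, noncrossing (e |: D) & cross d e.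
Proof.
case/noncrossing_setU1P=> ncD; case: d => [[a b] /= d_diag] cab dD.
have /andP[ab not_closing] : (a.+1 < b) && ~~ ((a == 0 :> nat) && (b == n.-1 :> nat))
  := d_diag.
have not_d h : h \in D -> (val h).1 = a :> nat -> (val h).2 = b :> nat -> False.
  by move=> hD h1 h2; move: dD; rewrite -(@diag_inj h (exist _ (a, b) d_diag)) ?hD.
have [X /andP[aX Xb] [cX1 cX2]] := inner_apex ab ncD cab.
have [Y [[bY [cY1 cY2]] | [Ya [cY1 cY2]]]] := outer_apex (ltnW ab) not_closing ncD cab.
- have e_diag : is_diag (X, Y) by rewrite /is_diag /=; lia.
  exists (exist _ (X, Y) e_diag : diag n); last by rewrite cross_interleave /interleave /=; lia.
  apply/noncrossing_setU1P; split=> // h hD /=; apply/negP => cross_e.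
  have [h1 h2] := quad_cross13 aX Xb bY (diag_lt h) (cX1 h hD) (cX2 h hD)
    (cY1 h hD) (cY2 h hD) cross_e.
  exact: not_d h1 h2.
- have e_diag : is_diag (Y, X) by rewrite /is_diag /=; have := ltn_ord b; lia.
  exists (exist _ (Y, X) e_diag : diag n); last by rewrite cross_interleave /interleave /=; lia.
  apply/noncrossing_setU1P; split=> // h hD /=; apply/negP => cross_e.
  have [h1 h2] := quad_cross02 Ya aX Xb (diag_lt h) (cY1 h hD) (cX1 h hD)
    (cX2 h hD) (cY2 h hD) cross_e.
  exact: not_d h1 h2.
Qed.

Lemma triangulation_noncrossing {T} : triangulation T -> noncrossing T.
Proof. by case/andP. Qed.

Lemma exists_triangulation_sup {D} : noncrossing D -> exists2 T, triangulation T & D \subset T.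
Proof.
move=> ncD; pose P T := noncrossing T && (D \subset T).
have PD : P D by rewrite /P ncD subxx.
case: (arg_maxnP (fun T => #|T|) PD) => T /andP[ncT sDT] Tmax.
exists T => //; rewrite /triangulation ncT; apply/forall_inP => d ncdT.
have := Tmax (d |: T); rewrite /P ncdT (subset_trans sDT (subsetUr _ _)) cardsU1.
by case: (d \in T) => // /(_ isT) /=; rewrite add1n ltnn.
Qed.

Lemma exists_triangulation_avoiding {D d} : noncrossing D -> d \notin D ->
  exists2 T, triangulation T && (D \subset T) & d \notin T.
Proof.
move=> ncD dD; case: (boolP (noncrossing (d |: D))) => [ncdD | ncdD].
  have [e nceD cde] := flip_diagonal ncdD dD.
  have [T tT seT] := exists_triangulation_sup nceD.
  exists T; first by rewrite tT (subset_trans (subsetUr _ _) seT).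
  have /noncrossingP ncT := triangulation_noncrossing tT.
  by apply: contraL cde => dT; apply: ncT => //; apply: (subsetP seT); rewrite setU11.
have [T tT sDT] := exists_triangulation_sup ncD.
exists T; first by rewrite tT sDT.
apply: contra ncdD => dT; apply: noncrossingS (triangulation_noncrossing tT).
by rewrite subUset sub1set dT.
Qed.

End Diagonals.

Local Open Scope ring_scope.

Lemma mean_indicator_eq (R : numFieldType) (I : finType) (S : {set I}) (P : pred I) (t : R) :
  S != set0 -> 0 < t ->
  (#|S|%:R^-1 * \sum_(i in S) (if P i then t else 0) == t) = [forall i in S, P i].
Proof.
move=> S0 t0; have cS : (#|S|%:R : R) != 0 by rewrite pnatr_eq0 -lt0n card_gt0.
have sum_t : \sum_(i in S) t = #|S|%:R * t by rewrite sumr_const mulr_natl.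
apply/eqP/forall_inP => [mean_t i iS | all_P].
  have ge0 j : j \in S -> 0 <= t - (if P j then t else 0).
    by case: (P j); rewrite ?subrr ?subr0 // ltW.
  have : \sum_(j in S) (t - (if P j then t else 0)) = 0.
    by rewrite sumrB sum_t -{1}mean_t mulrA mulfV // mul1r subrr.
  move/(psumr_eq0P ge0)/(_ i iS); case: (P i) => //; rewrite subr0 => t_eq0.
  by move: t0; rewrite t_eq0 ltxx.
by rewrite (eq_bigr (fun=> t)) => [|i iS]; rewrite ?all_P // sum_t mulKf.
Qed.

Section PhiCoordinates.

Variables (R : numFieldType) (n : nat).
Implicit Types (D : {set diag n}) (d : diag n).

Let triangs D := [set T : {set diag n} | triangulation T & D \subset T].

Lemma Phi_coord D d :
  Phi R D d = #|triangs D|%:R^-1 *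
    \sum_(T in triangs D) (if d \in T then (n - 3)%:R^-1 else 0).
Proof.
rewrite /Phi /GRing.scale /= ffunE sum_ffunE; congr (_ * _).
by apply: eq_big => [T | T _]; rewrite ?inE // ffunE.
Qed.

Lemma Phi_coord_eq D d : (4 <= n)%N -> noncrossing D ->
  (Phi R D d == (n - 3)%:R^-1) = (d \in D).
Proof.
move=> n4 ncD; rewrite Phi_coord mean_indicator_eq; last first.
- by rewrite invr_gt0 ltr0n subn_gt0.
- have [T tT sDT] := exists_triangulation_sup ncD.
  by apply/set0Pn; exists T; rewrite inE tT.
apply/forall_inP/idP => [in_all | dD T].
  apply: contraT => dD; have [T tsT dT] := exists_triangulation_avoiding ncD dD.
  by move: (in_all T); rewrite inE tsT (negbTE dT) => /(_ isT).
by rewrite inE => /andP[_ /subsetP]; apply.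
Qed.

End PhiCoordinates.

Section Coordinate.

Variables (R : comNzRingType) (I : finType) (i : I).

Definition coordinate (f : {ffun I -> R^o}) : R^o := f i.

Fact coordinate_is_linear : linear coordinate.
Proof. by move=> a f g; rewrite /coordinate !ffunE. Qed.

HB.instance Definition _ :=
  GRing.isLinear.Build R {ffun I -> R^o} R^o *%R coordinate coordinate_is_linear.

End Coordinate.

Arguments coordinate {R I} i f.

Lemma affinely_independent_triangular (R : fieldType) (V : lmodType R) m (x : 'I_m.+1 -> V) :
  (forall k : 'I_m.+1, (k < m)%N -> exists (phi : {scalar V}) (t : R),
     phi (x k) != t /\ forall l : 'I_m.+1, (k < l)%N -> phi (x l) = t) ->
  affinely_independent x.
Proof.
move=> tri c sum_c sum_cx.
have c_lt_m k : (k < m)%N -> forall i : 'I_m.+1, i = k :> nat -> c i = 0.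
  elim/ltn_ind: k => k IH km i ik.
  have [phi [t [phi_i phi_gt]]] : exists (phi : {scalar V}) (t : R),
      phi (x i) != t /\ forall l : 'I_m.+1, (i < l)%N -> phi (x l) = t.
    by apply: tri; rewrite ik.
  have : \sum_(l < m.+1) c l * (phi (x l) - t) = 0.
    under eq_bigr do rewrite mulrBr.
    rewrite sumrB -mulr_suml sum_c mul0r subr0.
    rewrite -[RHS](linear0 phi) -[X in _ = phi X]sum_cx linear_sum.
    by apply: eq_bigr => l _; rewrite linearZ.
  rewrite (bigD1 i) //= big1 ?addr0 => [/eqP | l li].
    by rewrite mulf_eq0 subr_eq0 (negbTE phi_i) orbF => /eqP.
  case: (ltngtP l i) => [lt_li | lt_il | /val_inj eq_li]; last by rewrite eq_li eqxx in li.
    by rewrite (IH l) ?mul0r // -?ik // (ltn_trans _ km) // -ik.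
  by rewrite phi_gt // subrr mulr0.
move=> i; case: (ltnP i m) => [im | mi]; first exact: c_lt_m im i erefl.
move: sum_c; rewrite (bigD1 i) //= big1 ?addr0 // => l li.
apply: (c_lt_m l) => //; move: li mi; rewrite -val_eqE /=; have := ltn_ord l; have := ltn_ord i.
lia.
Qed.

Theorem lemma16 (R : realFieldType) (n m : nat) (hn : (4 <= n)%N)
    (D : 'I_m.+1 -> {set diag n})
    (hnc : forall i, noncrossing (D i))
    (hchain : forall i j : 'I_m.+1, (i < j)%N -> D i \proper D j) :
  affinely_independent (fun i => Phi R (D i)).
Proof.
have chain_sub (i j : 'I_m.+1) : (i <= j)%N -> D i \subset D j.
  by rewrite leq_eqVlt => /orP[/eqP/val_inj -> // | /hchain/properP[]].
apply: affinely_independent_triangular => k km.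
have kS : (k < (inord k.+1 : 'I_m.+1))%N by rewrite inordK.
have /properP[_ [d dS dk]] := hchain k (inord k.+1) kS.
exists (coordinate d), (n - 3)%:R^-1; split; first by rewrite /coordinate Phi_coord_eq.
move=> l kl; apply/eqP; rewrite /coordinate Phi_coord_eq //.
by apply: (subsetP (chain_sub _ _ _)) dS; rewrite inordK.
Qed.
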